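(* Let $d\ge 3$ be an integer, $p\in(0,1]$, and $\delta\in(0,1)$ with $\delta dp\ge 2\log^2 d$. Consider any realisation of $Q^d_p$ and the pruning process defined in the context. Let $t\in[2,\tau]\cap\mathbb{N}$. If $v\in A_t$, then there is a set $X$ of at least $\left(\frac{\delta dp}{2t\log d}\right)^{t-1}$ vertices, each at distance exactly $t-1$ from $v$ in $Q^d$, such that for all $x\in X$, $d_{Q^d_p}(x)\notin[(1-\delta_1)dp,(1+\delta_1)dp]$ (indeed $X\subseteq A_1$).
   Context: $Q^d$ is the $d$-dimensional hypercube (vertex set $\{0,1\}^d$, adjacency = Hamming distance one), and $Q^d_p$ is obtained by retaining each edge of $Q^d$ independently with probability $p$. For a graph $F$ and $S\subseteq V(F)$, $F[S]$ is the induced subgraph. Pruning process: let $\tau=\lfloor\log d\rfloor$ (natural log) and $\delta_t=\frac{t\delta}{\lfloor\log d\rfloor}$ for $t\in\mathbb{N}$. Let $H_1=Q^d_p$ and $A_1=\{v\in V(Q^d): d_{H_1}(v)\notin[(1-\delta_1)dp,(1+\delta_1)dp]\}$. For $t=2,\dots,\tau$, let $H_t=Q^d_p\left[V(Q^d)\setminus\bigcup_{i=1}^{t-1}A_i\right]$ and $A_t=\{v\in V(H_t): d_{H_t}(v)<(1-\delta_t)dp\}$. Finally $H=H_\tau$ and $A=\bigcup_{t=1}^\tau A_t$. Distances are in $Q^d$; $N^k(v)$ is the set of vertices at distance exactly $k$ from $v$ in $Q^d$. *)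

From mathcomp Require Import all_boot all_order all_algebra.
From mathcomp Require Import all_classical all_reals all_analysis.
Set Implicit Arguments. Unset Strict Implicit. Unset Printing Implicit Defensive.
Import Order.TTheory GRing.Theory Num.Theory.
Local Open Scope ring_scope.

Definition cube (d : nat) := {ffun 'I_d -> bool}.

(* Hamming distance = distance in Q^d. *)
Definition hdist (d : nat) (u v : cube d) : nat := #|[set i | u i != v i]|.

(* A realisation of Q^d_p: a spanning subgraph of Q^d, given by a symmetric
   edge relation E all of whose edges are edges of Q^d. *)
Definition subcube (d : nat) (E : rel (cube d)) : Prop :=
  (forall u v, E u v = E v u) /\ (forall u v, E u v -> hdist u v = 1%N).

Definition deg (d : nat) (E : rel (cube d)) (S : {set cube d}) (v : cube d) : nat :=
  #|[set u in S | E v u]|.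

(* tau = floor(log d) (natural log; log d >= 0 for d >= 1). *)
Definition tau {R : realType} (d : nat) : nat := Num.truncn (ln (d%:R : R)).

Definition deltat {R : realType} (d : nat) (delta : R) (t : nat) : R :=
  t%:R * delta / (tau (R:=R) d)%:R.

(* prune n = (A_{n+1}, A_1 :|: ... :|: A_{n+1}). *)
Fixpoint prune {R : realType} (d : nat) (E : rel (cube d)) (p delta : R) (n : nat)
  : {set cube d} * {set cube d} :=
  match n with
  | O =>
      let A1 := [set v | ~~ (((1 - deltat d delta 1) * d%:R * p <= (deg E [set: cube d]%SET v)%:R)
                             && ((deg E [set: cube d]%SET v)%:R <= (1 + deltat d delta 1) * d%:R * p))] in
      (A1, A1)
  | n'.+1 =>
      let U := (prune E p delta n').2 in
      let At := [set v in ~: U |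
                  (deg E (~: U) v)%:R < (1 - deltat d delta n.+1) * d%:R * p] in
      (At, U :|: At)
  end.

(* A_t for t >= 1 (H_t is the induced subgraph on the complement of A_1..A_{t-1}). *)
Definition Aset {R : realType} (d : nat) (E : rel (cube d)) (p delta : R) (t : nat)
  : {set cube d} := (prune E p delta t.-1).1.

From mathcomp Require Import all_boot all_order all_algebra.
From mathcomp Require Import all_classical all_reals all_analysis.
From mathcomp Require Import ring lra zify.
Import Order.TTheory GRing.Theory Num.Theory.
Set Implicit Arguments. Unset Strict Implicit. Unset Printing Implicit Defensive.
Local Open Scope ring_scope.

(* A vertex of A_{s+1} had degree at least (1 - delta_s)dp in H_s but has degree below
   (1 - delta_{s+1})dp in H_{s+1} = H_s - A_s, so it has more than delta dp / floor(log d)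
   neighbours in A_s.  Count the vertices of A_1 at distance s - 1 from w in A_s that agree
   with w on a set C of frozen coordinates.  The neighbours of w in A_{s-1} obtained by
   flipping a coordinate i outside C number at least (s - 1) K, and each of them, with i
   frozen as well, contributes K^(s-2) such vertices by induction; a vertex x at distance
   s - 1 from w is produced by at most s - 1 coordinates i, namely those where x and w
   differ.  Hence there are at least K^(s-1) of them, for K = delta dp / (2 t log d), the
   condition delta dp >= 2 log^2 d leaving room for the t coordinates that get frozen. *)

Section Hypercube.

Variable d : nat.
Implicit Types (u w x : cube d) (i : 'I_d) (C : {set 'I_d}).

Definition flip w i : cube d := [ffun k => if k == i then ~~ w k else w k].

Definition diffc u w : {set 'I_d} := [set i | u i != w i].

Definition agree C u w : bool := [forall j in C, u j == w j].

Lemma hdistE u w : hdist u w = #|diffc u w|.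
Proof. by []. Qed.

Lemma hdistxx w : hdist w w = 0%N.
Proof. by apply/eqP; rewrite cards_eq0; apply/eqP/setP => j; rewrite !inE eqxx. Qed.

Lemma flip_inj w : injective (flip w).
Proof.
move=> i j /ffunP /(_ i); rewrite !ffunE eqxx.
by case: eqP => // _; case: (w i).
Qed.

Lemma hdist1P w u : hdist w u = 1%N -> exists i, u = flip w i.
Proof.
move=> /eqP /cards1P [i diff_i]; exists i; apply/ffunP => k; rewrite ffunE.
have /setP /(_ k) := diff_i; rewrite !inE.
case: (k =P i) => [-> | _]; first by case: (w i); case: (u i).
by move/negbFE/eqP.
Qed.

Lemma hdist_flip w i x : x i != w i -> hdist w x = (hdist (flip w i) x).+1.
Proof.
move=> xi; rewrite !hdistE -add1n.
have -> : diffc w x = i |: diffc (flip w i) x.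
  apply/setP => j; rewrite !inE ffunE.
  by case: (j =P i) => [->|] //=; rewrite eq_sym xi; case: (w i) (x i) xi => [] [].
by rewrite cardsU1 inE ffunE eqxx; case: (w i) (x i) xi => [] [].
Qed.

Definition shell (A : {set cube d}) w C k : {set cube d} :=
  [set x in A | (hdist w x == k) && agree C x w].

Lemma shell_flip A w C i k x : i \notin C ->
  x \in shell A (flip w i) (i |: C) k -> x \in shell A w C k.+1 /\ i \in diffc w x.
Proof.
move=> iNC; rewrite !inE => /andP [xA /andP [/eqP dist_x /forall_inP agree_x]].
have xi : x i != w i.
  by have := agree_x i (setU11 i C); rewrite ffunE eqxx => /eqP ->; case: (w i).
rewrite xA (hdist_flip xi) dist_x eqxx eq_sym xi /=; split => //.
apply/forall_inP => j jC; have := agree_x j; rewrite !inE jC orbT ffunE => /(_ isT) /eqP ->.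
by case: (j =P i) => [ji | //]; move: iNC; rewrite -ji jC.
Qed.

End Hypercube.

Lemma sum_card_le_mul (T U : finType) (I : {set T}) (F : T -> {set U}) (Y : {set U}) (m : nat) :
  (forall i, i \in I -> F i \subset Y) ->
  (forall x, x \in Y -> #|[set i in I | x \in F i]| <= m)%N ->
  (\sum_(i in I) #|F i| <= m * #|Y|)%N.
Proof.
move=> FY mult.
have card_sum (V : finType) (A : {set V}) (P : pred V) :
  #|[set v in A | P v]| = (\sum_(v in A) P v)%N.
  by rewrite -sum1dep_card big_mkcondr.
rewrite (eq_bigr (fun i => \sum_(x in Y) (x \in F i))%N) => [|i iI]; last first.
  rewrite -card_sum; apply: eq_card => x; rewrite inE.
  by case xF: (x \in F i); rewrite ?andbF ?andbT // (fintype.subsetP (FY i iI)).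
rewrite exchange_big mulnC -sum_nat_const; apply: leq_sum => x xY.
by rewrite -card_sum mult.
Qed.

Section Shells.

Variables (d : nat) (E : rel (cube d)).
Hypothesis E_hdist : forall u w, E u w -> hdist u w = 1%N.

Lemma deg_flipE (A : {set cube d}) w : deg E A w = #|[set i | (flip w i \in A) && E w (flip w i)]|.
Proof.
rewrite /deg -(card_imset _ (@flip_inj d w)); apply: eq_card => u.
rewrite inE; apply/andP/imsetP => [[uA Ewu] | [i + ->]]; last by rewrite inE => /andP.
by have [i u_def] := hdist1P (E_hdist Ewu); exists i; rewrite // inE -u_def uA.
Qed.

Variables (R : realFieldType) (B : nat -> {set cube d}) (K : R) (t : nat).
Hypothesis K_ge0 : 0 <= K.
Hypothesis B_deg : forall n w, (n.+1 < t)%N -> w \in B n.+1 ->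
  n.+1%:R * K + t%:R <= (deg E (B n) w)%:R.

Lemma shell_card_ge n w (C : {set 'I_d}) : w \in B n -> (#|C| + n < t)%N ->
  K ^+ n <= (#|shell (B 0) w C n|)%:R.
Proof.
elim: n w C => [|n IH] w C wB Ct.
  rewrite expr0 ler1n card_gt0; apply/set0Pn; exists w.
  by rewrite inE wB hdistxx eqxx; apply/forall_inP.
set S := [set i | (flip w i \in B n) && E w (flip w i)].
set I := S :\: C.
set F := fun i => shell (B 0) (flip w i) (i |: C) n.
set Y := shell (B 0) w C n.+1.
have card_I : n.+1%:R * K <= (#|I|)%:R.
  have S_le : (#|S| <= #|I| + #|C|)%N.
    by rewrite -(cardsID C S) addnC leq_add2l subset_leq_card // subsetIr.
  have C_le : (#|C| <= t)%N by lia.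
  have := B_deg (leq_ltn_trans (leq_addl _ _) Ct) wB; rewrite deg_flipE -/S.
  move: S_le C_le; rewrite -(ler_nat R) -(ler_nat R) natrD; lra.
have card_F i : i \in I -> K ^+ n <= (#|F i|)%:R.
  rewrite inE => /andP [iNC]; rewrite inE => /andP [flipB _].
  by apply: IH => //; rewrite cardsU1 iNC; lia.
have F_sub i : i \in I -> F i \subset Y.
  by rewrite inE => /andP [iNC _]; apply/fintype.subsetP => x /(shell_flip iNC) [].
have mult x : x \in Y -> (#|[set i in I | x \in F i]| <= n.+1)%N.
  rewrite inE => /andP [_ /andP [/eqP <- _]]; rewrite hdistE.
  apply/subset_leq_card/fintype.subsetP => i; rewrite inE => /andP [+ xF].
  by rewrite inE => /andP [iNC _]; have [] := shell_flip iNC xF.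
have sum_ge : (#|I|)%:R * K ^+ n <= (\sum_(i in I) #|F i|)%:R.
  by rewrite natr_sum mulr_natl -sumr_const; apply: ler_sum.
have sum_le := sum_card_le_mul F_sub mult.
rewrite -(ler_pM2l (ltr0Sn R n)) exprS mulrA.
apply: le_trans (ler_wpM2r (exprn_ge0 n K_ge0) card_I) _.
by apply: le_trans sum_ge _; rewrite -natrM ler_nat.
Qed.

End Shells.

Lemma deg_setD (d : nat) (E : rel (cube d)) (P A : {set cube d}) (w : cube d) :
  A \subset P -> deg E P w = (deg E (P :\: A) w + deg E A w)%N.
Proof.
move=> AP; rewrite /deg -(cardsID A [set u in P | E w u]) addnC; congr (_ + _)%N.
  by apply: eq_card => u; rewrite !inE andbA.
apply: eq_card => u; rewrite !inE; case uA: (u \in A); rewrite ?andbF //=.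
by rewrite (fintype.subsetP AP u uA) andbT.
Qed.

Section Pruning.

Variables (R : realType) (d : nat) (E : rel (cube d)) (p delta : R).

Definition Hset (t : nat) : {set cube d} :=
  if t is m.+2 then ~: (prune E p delta m).2 else [set: cube d].

Lemma Aset_sub_Hset t : Aset E p delta t \subset Hset t.
Proof.
case: t => [|[|m]]; rewrite /Hset ?subsetT //.
by apply/fintype.subsetP => w; rewrite inE => /andP [].
Qed.

Lemma HsetS t : (0 < t)%N -> Hset t.+1 = Hset t :\: Aset E p delta t.
Proof. by case: t => [|[|m]] //= _; rewrite ?finset.setTD // finset.setCU finset.setDE. Qed.

Lemma AsetSSE t : Aset E p delta t.+2 =
  [set w in Hset t.+2 | (deg E (Hset t.+2) w)%:R < (1 - deltat d delta t.+2) * d%:R * p].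
Proof. by []. Qed.

Lemma deg_Hset_ge t w : w \in Hset t.+1 -> w \notin Aset E p delta t.+1 ->
  (1 - deltat d delta t.+1) * d%:R * p <= (deg E (Hset t.+1) w)%:R.
Proof.
case: t => [_|t wH]; first by rewrite inE negbK => /andP [].
by rewrite AsetSSE inE wH /= -leNgt.
Qed.

Lemma Aset_deg_gap t w : w \in Aset E p delta t.+2 ->
  (deltat d delta t.+2 - deltat d delta t.+1) * d%:R * p < (deg E (Aset E p delta t.+1) w)%:R.
Proof.
rewrite AsetSSE inE => /andP [+ deg_lt]; rewrite HsetS // inE => /andP [wNA wH].
have := deg_Hset_ge wH wNA.
rewrite (deg_setD _ _ (Aset_sub_Hset t.+1)) -HsetS // natrD.
lra.
Qed.

End Pruning.

Lemma deltatS (R : realType) (d : nat) (delta : R) (t : nat) :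
  deltat d delta t.+1 - deltat d delta t = delta / (tau (R:=R) d)%:R.
Proof. by rewrite /deltat -mulrBl -mulrBl mulrSr addrAC subrr add0r mul1r. Qed.

Lemma branching_bound (R : realFieldType) (D L T t : R) :
  0 < t -> t <= T -> T <= L -> 2 * L ^+ 2 <= D -> t * (D / (2 * t * L)) + t <= D / T.
Proof.
move=> t_gt0 tT TL LD.
have T_gt0 : 0 < T := lt_le_trans t_gt0 tT.
have L_gt0 : 0 < L := lt_le_trans T_gt0 TL.
have D_ge0 : 0 <= D by apply: le_trans LD; rewrite mulr_ge0 // exprn_ge0 // ltW.
have -> : t * (D / (2 * t * L)) = D / (2 * L) by field; rewrite !gt_eqF.
have L_le : L <= D / (2 * L) by rewrite ler_pdivlMr ?mulr_gt0 // mulrCA -expr2.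
have DLT : D / L <= D / T by rewrite ler_wpM2l // lef_pV2 // posrE.
have : D / L = D / (2 * L) + D / (2 * L) by field; rewrite gt_eqF.
lra.
Qed.

Theorem lemma2p3 (R : realType) (d : nat) (p delta : R) (E : rel (cube d)) (t : nat) (v : cube d) :
  (3 <= d)%N ->
  0 < p -> p <= 1 ->
  0 < delta -> delta < 1 ->
  2 * (ln (d%:R : R)) ^+ 2 <= delta * d%:R * p ->
  subcube E ->
  (2 <= t)%N -> (t <= tau (R:=R) d)%N ->
  v \in Aset E p delta t ->
  exists X : {set cube d},
    [/\ (forall x, x \in X -> hdist v x = t.-1),
        (delta * d%:R * p / (2 * t%:R * ln (d%:R : R))) ^+ t.-1 <= (#|X|)%:R
      & (forall x, x \in X ->
           ~~ (((1 - deltat d delta 1) * d%:R * p <= (deg E [set: cube d]%SET x)%:R)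
               && ((deg E [set: cube d]%SET x)%:R <= (1 + deltat d delta 1) * d%:R * p)))].
Proof.
move=> d_ge3 p_gt0 _ delta_gt0 _ lnD [_ E_hdist] t_ge2 t_le_tau vA.
set L := ln (d%:R : R); set T : R := (tau (R:=R) d)%:R; set D := delta * d%:R * p.
have L_gt0 : 0 < L by apply: ln_gt0; rewrite ltr1n; lia.
have T_le_L : T <= L by rewrite /T /tau truncn_le ltW.
have t_le_T : t%:R <= T by rewrite ler_nat.
have t_gt0 : 0 < t%:R :> R by rewrite ltr0n; lia.
have T_gt0 : 0 < T := lt_le_trans t_gt0 t_le_T.
set K := D / (2 * t%:R * L).
have K_ge0 : 0 <= K by rewrite /K /D divr_ge0 // !mulr_ge0 // ltW.
have B_deg n w : (n.+1 < t)%N -> w \in Aset E p delta n.+2 ->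
    n.+1%:R * K + t%:R <= (deg E (Aset E p delta n.+1) w)%:R.
  move=> n_lt /Aset_deg_gap; rewrite deltatS.
  have -> : delta / T * d%:R * p = D / T by rewrite /D; field; rewrite gt_eqF.
  have nK : n.+1%:R * K <= t%:R * K by rewrite ler_wpM2r // ler_nat ltnW.
  have := branching_bound t_gt0 t_le_T T_le_L lnD; rewrite -/D -/K; lra.
exists (shell (Aset E p delta 1) v (finset.set0 : {set 'I_d}) t.-1); split.
- by move=> x; rewrite inE => /andP [_ /andP [/eqP]].
- apply: (shell_card_ge (B := fun n => Aset E p delta n.+1) E_hdist K_ge0 B_deg).
    by rewrite prednK // ltnW.
  by rewrite finset.cards0 add0n ltn_predL (ltnW t_ge2).
- by move=> x; rewrite inE => /andP [+ _]; rewrite /Aset /= inE.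
Qed.
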